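(* For every $\varepsilon \in (0,1]$, $$\inf_{\mu} \sup_{j \geq 1} |\widehat\mu(j)| \;\geq\; \frac{\pi\varepsilon}{8 + 2\pi\varepsilon} \;\geq\; \frac{\varepsilon}{5},$$ where the infimum is over all Borel probability measures $\mu$ on $\mathbf{R}$ with $\mu([\varepsilon,1]) = 1$, and the supremum is over all positive integers $j$.
   Context: For a finite Borel measure $\mu$ on $\mathbf{R}$, its Fourier transform is $\widehat\mu(\xi) = \int e^{-2\pi i \xi x}\,d\mu(x)$ for $\xi \in \mathbf{R}$. *)

From Stdlib Require Import Reals Lra List.
Import ListNotations.
Open Scope R_scope.

Inductive borel : (R -> Prop) -> Prop :=
  | borel_open : forall A, open_set A -> borel A
  | borel_compl : forall A, borel A -> borel (fun x => ~ A x)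
  | borel_cunion : forall A : nat -> R -> Prop,
      (forall n, borel (A n)) -> borel (fun x => exists n, A n x).

Definition finite_borel_measure (mu : (R -> Prop) -> R) : Prop :=
  (forall A, borel A -> 0 <= mu A) /\
  mu (fun _ => False) = 0 /\
  (forall A : nat -> R -> Prop,
     (forall n, borel (A n)) ->
     (forall n m x, n <> m -> A n x -> A m x -> False) ->
     infinite_sum (fun n => mu (A n)) (mu (fun x => exists n, A n x))).

Definition borel_probability_measure (mu : (R -> Prop) -> R) : Prop :=
  finite_borel_measure mu /\ mu (fun _ => True) = 1.

(* A Borel simple function given as a finite Borel partition of R with values. *)
Definition simple_partition (l : list ((R -> Prop) * R)) : Prop :=
  Forall (fun p => borel (fst p)) l /\
  ForallOrdPairs (fun p q => forall x, fst p x -> fst q x -> False) l /\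
  (forall x, exists p, In p l /\ fst p x).

Definition simple_integral (mu : (R -> Prop) -> R) (l : list ((R -> Prop) * R)) : R :=
  fold_right (fun p acc => snd p * mu (fst p) + acc) 0 l.

Definition simple_below (f : R -> R) (l : list ((R -> Prop) * R)) : Prop :=
  Forall (fun p => forall x, fst p x -> snd p <= f x) l.

Definition simple_above (f : R -> R) (l : list ((R -> Prop) * R)) : Prop :=
  Forall (fun p => forall x, fst p x -> f x <= snd p) l.

(* Lebesgue integral of a bounded function against a finite measure:
   I lies between all lower and upper simple integrals, and these can be
   made arbitrarily close (so I = sup lower = inf upper, unique). *)
Definition is_integral (mu : (R -> Prop) -> R) (f : R -> R) (I : R) : Prop :=
  (forall l, simple_partition l -> simple_below f l -> simple_integral mu l <= I) /\
  (forall l, simple_partition l -> simple_above f l -> I <= simple_integral mu l) /\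
  (forall eta, 0 < eta -> exists l u,
      simple_partition l /\ simple_below f l /\
      simple_partition u /\ simple_above f u /\
      simple_integral mu u - simple_integral mu l < eta).

(* a = |hat mu (xi)|, where hat mu(xi) = int e^{-2 pi i xi x} dmu(x)
     = int cos(2 pi xi x) dmu - i int sin(2 pi xi x) dmu. *)
Definition fourier_abs (mu : (R -> Prop) -> R) (xi : R) (a : R) : Prop :=
  exists C S,
    is_integral mu (fun x => cos (2 * PI * xi * x)) C /\
    is_integral mu (fun x => sin (2 * PI * xi * x)) S /\
    a = sqrt (C ^ 2 + S ^ 2).

(* Let [f t = sum_(j>=1) cos (2 PI j t) / j^2], which equals [PI^2 (t^2 - t + 1/6)] on [[0,1]].
   For [eps <= x <= 1] its second difference [f x - 2 f (x - eps/2) + f (x - eps)] is the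
   constant [PI^2 eps^2 / 2]; integrating it against [mu] and expanding it in its Fourier
   series gives [PI^2 eps^2 / 2 <= sup_j |hat mu j| * sum_j 4 sin (PI j eps / 2)^2 / j^2], and the
   last sum is at most [4 PI eps + PI^2 eps^2] (bound the terms by [PI^2 eps^2] for
   [j <= 2 / (PI eps)] and by [4 / j^2] beyond).
   The closed form of [f] is only needed approximately, at grid points [k / M]: there it follows
   from the exact evaluation of [sum_(0<j<M) cos (2 PI j k / M) / sin (PI j / M)^2], which is
   quadratic in [k].  Integrals are handled through Riemann sums on a uniform grid of
   [[eps,1]], which are linear and converge for Lipschitz integrands. *)

From Stdlib Require Import Reals Lra Lia ZArith List.
From Stdlib Require Import Classical FunctionalExtensionality PropExtensionality ClassicalEpsilon.
Import ListNotations.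
Open Scope R_scope.

(** * Finite sums and elementary estimates *)

Fixpoint sumR (n : nat) (f : nat -> R) : R :=
  match n with O => 0 | S n => sumR n f + f n end.

Lemma sumR_ext n f g : (forall i, (i < n)%nat -> f i = g i) -> sumR n f = sumR n g.
Proof.
  induction n as [|n IH]; intros H; simpl; auto.
  rewrite IH by (intros; apply H; lia). rewrite H by lia. reflexivity.
Qed.

Lemma sumR_plus n f g : sumR n (fun i => f i + g i) = sumR n f + sumR n g.
Proof. induction n; simpl; [lra|]. rewrite IHn; ring. Qed.

Lemma sumR_minus n f g : sumR n (fun i => f i - g i) = sumR n f - sumR n g.
Proof. induction n; simpl; [lra|]. rewrite IHn; ring. Qed.

Lemma sumR_scal n c f : sumR n (fun i => c * f i) = c * sumR n f.
Proof. induction n; simpl; [lra|]. rewrite IHn; ring. Qed.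

Lemma sumR_div n c f : sumR n (fun i => f i / c) = sumR n f / c.
Proof. unfold Rdiv. rewrite Rmult_comm, <- sumR_scal. apply sumR_ext; intros; ring. Qed.

Lemma sumR_const n c : sumR n (fun _ => c) = INR n * c.
Proof. induction n; simpl sumR; [simpl; lra|]. rewrite IHn, S_INR; ring. Qed.

Lemma sumR_le n f g : (forall i, (i < n)%nat -> f i <= g i) -> sumR n f <= sumR n g.
Proof.
  induction n as [|n IH]; intros H; simpl; [lra|].
  pose proof (IH ltac:(intros; apply H; lia)). pose proof (H n ltac:(lia)). lra.
Qed.

Lemma Rabs_sumR_le n f : Rabs (sumR n f) <= sumR n (fun i => Rabs (f i)).
Proof.
  induction n; simpl; [rewrite Rabs_R0; lra|].
  eapply Rle_trans; [apply Rabs_triang|]. lra.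
Qed.

Lemma sumR_add a b f : sumR (a + b) f = sumR a f + sumR b (fun i => f (a + i)%nat).
Proof.
  induction b; simpl; [rewrite Nat.add_0_r; ring|].
  rewrite Nat.add_succ_r; simpl. rewrite IHb; ring.
Qed.

Lemma sumR_Sl m f : sumR (S m) f = f O + sumR m (fun i => f (S i)).
Proof. replace (S m) with (1 + m)%nat by lia. rewrite sumR_add. simpl. ring. Qed.

Lemma sumR_nonneg n f : (forall i, (i < n)%nat -> 0 <= f i) -> 0 <= sumR n f.
Proof.
  intros H. replace 0 with (sumR n (fun _ => 0)) by (rewrite sumR_const; ring).
  apply sumR_le. exact H.
Qed.

Lemma sumR_le_add n m f : (forall i, 0 <= f i) -> sumR n f <= sumR (m + n) f.
Proof.
  intros H. rewrite Nat.add_comm, sumR_add.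
  pose proof (sumR_nonneg m (fun i => f (n + i)%nat) (fun i _ => H (n + i)%nat)). lra.
Qed.

Lemma sumR_rev n f : sumR n (fun i => f (n - 1 - i)%nat) = sumR n f.
Proof.
  revert f; induction n as [|n IH]; intros f; [reflexivity|].
  rewrite sumR_Sl. simpl sumR at 2. rewrite <- (IH f).
  rewrite (sumR_ext n _ (fun i => f (n - 1 - i)%nat)) by (intros; f_equal; lia).
  replace (S n - 1 - 0)%nat with n by lia. ring.
Qed.

Lemma floor_nat y : 0 <= y -> exists k : nat, INR k <= y < INR k + 1.
Proof.
  intros hy. destruct (archimed y) as [a1 a2].
  assert (hz : (0 < up y)%Z) by (apply lt_IZR; simpl; lra).
  exists (Z.to_nat (up y - 1)). rewrite INR_IZR_INZ, Z2Nat.id by lia.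
  rewrite minus_IZR. simpl. lra.
Qed.

Lemma archimed_inv C eta : 0 < eta -> exists n, (1 <= n)%nat /\ C / INR n < eta.
Proof.
  intros Heta. destruct (Rle_dec C 0) as [HC|HC].
  { exists 1%nat. split; [lia|]. simpl. unfold Rdiv. rewrite Rinv_1. lra. }
  destruct (floor_nat (C / eta)) as [k [_ Hk]].
  { apply Rlt_le, Rdiv_lt_0_compat; lra. }
  exists (S k). split; [lia|]. rewrite S_INR. pose proof (pos_INR k).
  apply Rmult_lt_reg_r with ((INR k + 1) / eta); [apply Rdiv_lt_0_compat; lra|].
  replace (C / (INR k + 1) * ((INR k + 1) / eta)) with (C / eta) by (field; lra).
  replace (eta * ((INR k + 1) / eta)) with (INR k + 1) by (field; lra). lra.
Qed.

Lemma le_of_forall_sub_inv a b C :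
  (forall n, (1 <= n)%nat -> a - C / INR n <= b) -> a <= b.
Proof.
  intros H. apply Rnot_lt_le. intros Hba.
  destruct (archimed_inv C (a - b)) as [n [Hn HCn]]; [lra|].
  specialize (H n Hn). lra.
Qed.

Lemma inv_sq_le_telescope a : 0 < a -> / (a + 1) ^ 2 <= / a - / (a + 1).
Proof.
  intros Ha. replace (/ a - / (a + 1)) with (/ (a * (a + 1))) by (field; lra).
  apply Rinv_le_contravar; [apply Rmult_lt_0_compat; lra| nra].
Qed.

Lemma Rabs_le_inv x a : Rabs x <= a -> - a <= x <= a.
Proof. unfold Rabs. destruct (Rcase_abs x); intros; split; lra. Qed.

Lemma Rabs_sin_le z : Rabs (sin z) <= Rabs z.
Proof.
  assert (Hpos : forall y, 0 < y -> Rabs (sin y) <= y).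
  { intros y Hy. pose proof (sin_lt_x y Hy). pose proof (SIN_bound y).
    apply Rabs_le. split; [|lra].
    destruct (Rle_dec y 1); [|lra].
    assert (0 < sin y) by (apply sin_gt_0; pose proof PI2_3_2; lra). lra. }
  destruct (Rtotal_order z 0) as [h|[h|h]].
  - rewrite <- Rabs_Ropp, <- sin_neg, (Rabs_left z) by lra. apply Hpos; lra.
  - subst; rewrite sin_0, Rabs_R0; lra.
  - rewrite (Rabs_pos_eq z) by lra. apply Hpos; lra.
Qed.

Lemma Rabs_2_mul_sin_half_le u d : Rabs u <= 1 -> Rabs (2 * u * sin (d / 2)) <= Rabs d.
Proof.
  intros Hu. rewrite !Rabs_mult, (Rabs_pos_eq 2) by lra.
  pose proof (Rabs_sin_le (d / 2)) as Hs.
  unfold Rdiv in Hs. rewrite Rabs_mult, (Rabs_pos_eq (/ 2)) in Hs by lra.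
  pose proof (Rabs_pos u). pose proof (Rabs_pos (sin (d / 2))). nra.
Qed.

Lemma cos_sub_Rabs_le a b : Rabs (cos a - cos b) <= Rabs (a - b).
Proof.
  rewrite form2. replace (-2 * sin ((a - b) / 2) * sin ((a + b) / 2))
    with (2 * (- sin ((a + b) / 2)) * sin ((a - b) / 2)) by ring.
  apply Rabs_2_mul_sin_half_le. rewrite Rabs_Ropp. apply Rabs_le, SIN_bound.
Qed.

Lemma sin_sub_Rabs_le a b : Rabs (sin a - sin b) <= Rabs (a - b).
Proof. rewrite form4. apply Rabs_2_mul_sin_half_le, Rabs_le, COS_bound. Qed.

Lemma PI_lt_17_5 : PI < 17 / 5.
Proof.
  pose proof (PI_ineq 2) as [_ H].
  unfold sum_f_R0, tg_alt, PI_tg in H. simpl in H. lra.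
Qed.

(* From [y - y^3/6 <= sin y]; the bound [y^2 < 3] is where [PI < 2 sqrt 3] is needed. *)
Lemma inv_sin_sq_sub_inv_sq y : 0 < y < PI / 2 -> 0 <= / sin y ^ 2 - / y ^ 2 <= 1.
Proof.
  intros [h1 h2]. pose proof PI_lt_17_5.
  pose proof (sin_lt_x y h1). assert (hs : 0 < sin y) by (apply sin_gt_0; lra).
  pose proof (sin_bound y 0 ltac:(lra) ltac:(lra)) as [Hl _].
  unfold sin_approx, sin_term in Hl. simpl in Hl.
  assert (Hy3 : y * (1 - y ^ 2 / 6) <= sin y) by lra.
  assert (hu : y ^ 2 < 3) by nra.
  split.
  - assert (/ y ^ 2 <= / sin y ^ 2); [|lra].
    apply Rinv_le_contravar; [apply pow_lt; lra| apply pow_incr; lra].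
  - assert (Hsq : y ^ 2 <= sin y ^ 2 * (1 + y ^ 2)).
    { assert (0 <= y * (1 - y ^ 2 / 6)) by nra.
      assert ((y * (1 - y ^ 2 / 6)) ^ 2 <= sin y ^ 2) by (apply pow_incr; lra).
      assert (y ^ 2 <= (y * (1 - y ^ 2 / 6)) ^ 2 * (1 + y ^ 2)); [|nra].
      replace ((y * (1 - y ^ 2 / 6)) ^ 2) with (y ^ 2 * (1 - y ^ 2 / 6) ^ 2) by ring.
      assert (0 <= y ^ 2) by nra. set (u := y ^ 2) in *.
      assert (0 <= (3 - u) * (8 - u)) by (apply Rmult_le_pos; lra).
      assert (0 <= u * (24 - 11 * u + u ^ 2)) by (apply Rmult_le_pos; nra). nra. }
    apply Rmult_le_reg_r with (sin y ^ 2 * y ^ 2); [apply Rmult_lt_0_compat; apply pow_lt; lra|].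
    field_simplify; [lra| split; lra].
Qed.

Lemma sin_mul_sum_cos phi n :
  2 * sin (phi / 2) * sumR n (fun j => cos (INR j * phi)) = sin ((INR n - 1 / 2) * phi) + sin (phi / 2).
Proof.
  induction n as [|n IH].
  - simpl. replace ((0 - 1 / 2) * phi) with (- (phi / 2)) by field. rewrite sin_neg; ring.
  - simpl sumR. rewrite Rmult_plus_distr_l, IH, S_INR.
    replace ((INR n - 1 / 2) * phi) with (INR n * phi - phi / 2) by field.
    replace ((INR n + 1 - 1 / 2) * phi) with (INR n * phi + phi / 2) by field.
    rewrite sin_plus, sin_minus. ring.
Qed.

(** * A discrete cosecant sum *)

(* A discrete analogue of [sum_j cos (2 PI j t) / j^2] (note [sin (PI j/M) ~ PI j/M]):
   its second difference in [k] is constant, so it is quadratic in [k]. *)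
Definition cosec_term (M k j : nat) : R :=
  cos (2 * PI * INR j * INR k / INR M) / sin (PI * INR j / INR M) ^ 2.

Definition cosec_sum (M k : nat) : R := sumR (M - 1) (fun i => cosec_term M k (S i)).

Lemma sin_grid_pos M j : (1 <= j)%nat -> (j < M)%nat -> 0 < sin (PI * INR j / INR M).
Proof.
  intros h1 h2. pose proof PI_RGT_0.
  assert (0 < INR M) by (apply lt_0_INR; lia). apply lt_INR in h2.
  assert (1 <= INR j) by (apply (le_INR 1); lia).
  apply sin_gt_0.
  - apply Rdiv_lt_0_compat; nra.
  - apply Rmult_lt_reg_r with (INR M); auto.
    replace (PI * INR j / INR M * INR M) with (PI * INR j) by (field; lra). nra.
Qed.

Lemma sum_cos_grid M k : (1 <= k)%nat -> (k < M)%nat ->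
  sumR (M - 1) (fun i => cos (2 * PI * INR (S i) * INR k / INR M)) = -1.
Proof.
  intros h1 h2. set (phi := 2 * PI * INR k / INR M).
  assert (HM : 0 < INR M) by (apply lt_0_INR; lia).
  pose proof (sin_mul_sum_cos phi M) as G.
  replace ((INR M - 1 / 2) * phi) with (- (phi / 2) + 2 * INR k * PI) in G by (unfold phi; field; lra).
  rewrite sin_period, sin_neg in G.
  assert (Hs : 0 < sin (phi / 2)).
  { replace (phi / 2) with (PI * INR k / INR M) by (unfold phi; field; lra). apply sin_grid_pos; lia. }
  assert (G2 : sumR M (fun j => cos (INR j * phi)) = 0).
  { apply Rmult_eq_reg_l with (2 * sin (phi / 2)); [rewrite G; ring| lra]. }
  replace M with (S (M - 1)) in G2 at 1 by lia. rewrite sumR_Sl in G2.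
  simpl INR in G2 at 1. rewrite Rmult_0_l, cos_0 in G2.
  rewrite (sumR_ext _ _ (fun i => cos (INR (S i) * phi))); [lra|].
  intros i _. f_equal. unfold phi. field. lra.
Qed.

Lemma cosec_term_second_diff M k j : (1 <= k)%nat -> (1 <= j)%nat -> (j < M)%nat ->
  cosec_term M (S k) j - 2 * cosec_term M k j + cosec_term M (k - 1) j
  = -4 * cos (2 * PI * INR j * INR k / INR M).
Proof.
  intros hk h1 h2. unfold cosec_term.
  pose proof (sin_grid_pos M j h1 h2) as hs.
  assert (HM : 0 < INR M) by (apply lt_0_INR; lia).
  set (a := 2 * PI * INR j * INR k / INR M). set (c := PI * INR j / INR M) in *.
  replace (2 * PI * INR j * INR (S k) / INR M) with (a + 2 * c)
    by (unfold a, c; rewrite S_INR; field; lra).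
  replace (2 * PI * INR j * INR (k - 1) / INR M) with (a - 2 * c)
    by (unfold a, c; rewrite minus_INR by lia; simpl INR; field; lra).
  rewrite cos_plus, cos_minus, cos_2a_sin, sin_2a.
  field. lra.
Qed.

Lemma cosec_sum_second_diff M k : (1 <= k)%nat -> (k < M)%nat ->
  cosec_sum M (S k) - 2 * cosec_sum M k + cosec_sum M (k - 1) = 4.
Proof.
  intros h1 h2. unfold cosec_sum.
  rewrite <- sumR_scal, <- sumR_minus, <- sumR_plus.
  rewrite (sumR_ext _ _ (fun i => -4 * cos (2 * PI * INR (S i) * INR k / INR M)))
    by (intros; apply cosec_term_second_diff; lia).
  rewrite sumR_scal, sum_cos_grid by lia. ring.
Qed.

Lemma cosec_sum_first_diff M : (1 <= M)%nat -> cosec_sum M 1 - cosec_sum M 0 = -2 * (INR M - 1).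
Proof.
  intros hM. unfold cosec_sum. rewrite <- sumR_minus.
  rewrite (sumR_ext _ _ (fun _ => -2)).
  { rewrite sumR_const, minus_INR by lia. simpl INR. ring. }
  intros i hi. unfold cosec_term.
  pose proof (sin_grid_pos M (S i) ltac:(lia) ltac:(lia)) as hs.
  assert (HM : 0 < INR M) by (apply lt_0_INR; lia).
  set (c := PI * INR (S i) / INR M) in *.
  replace (2 * PI * INR (S i) * INR 1 / INR M) with (2 * c) by (unfold c; simpl INR; field; lra).
  replace (2 * PI * INR (S i) * INR 0 / INR M) with 0 by (simpl INR; field; lra).
  rewrite cos_2a_sin, cos_0. field. lra.
Qed.

Lemma cosec_sum_closed_form M k : (2 <= M)%nat -> (k <= M)%nat ->
  cosec_sum M k = cosec_sum M 0 - 2 * INR k * (INR M - INR k).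
Proof.
  intros hM hk.
  assert (H : forall k, (k + 1 <= M)%nat ->
            cosec_sum M k = cosec_sum M 0 - 2 * INR k * (INR M - INR k) /\
            cosec_sum M (S k) = cosec_sum M 0 - 2 * INR (S k) * (INR M - INR (S k))).
  { induction k0 as [|k0 IH]; intros h.
    - split; [simpl; ring|]. pose proof (cosec_sum_first_diff M ltac:(lia)). simpl INR. lra.
    - destruct (IH ltac:(lia)) as [A B]. split; auto.
      pose proof (cosec_sum_second_diff M (S k0) ltac:(lia) ltac:(lia)) as D.
      replace (S k0 - 1)%nat with k0 in D by lia. rewrite !S_INR in *. nra. }
  destruct k as [|k]; [simpl; ring|]. apply (H k). lia.
Qed.

(** * The second difference of the cosine series *)

(* [cos_sq_sum N] is a partial sum of [sum_(j>=1) cos (2 PI j t) / j^2 = PI^2 (t^2 - t + 1/6)]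
   on [[0,1]]; only the consequence that its second difference with step [e/2] equals
   [PI^2 e^2 / 2] on [[e,1]] is used, and only as a lower bound. *)
Definition cos_sq_term (t : R) (j : nat) : R := cos (2 * PI * INR j * t) / INR j ^ 2.

Definition cos_sq_sum (N : nat) (t : R) : R := sumR N (fun i => cos_sq_term t (S i)).

Definition second_diff (g : R -> R) (e x : R) : R := g x - 2 * g (x - e / 2) + g (x - e).

Lemma second_diff_sumR N (g : nat -> R -> R) e x :
  second_diff (fun t => sumR N (fun i => g i t)) e x = sumR N (fun i => second_diff (g i) e x).
Proof. unfold second_diff. rewrite !sumR_plus, sumR_minus, sumR_scal. reflexivity. Qed.

Lemma sumR_symmetric L (G : nat -> R) :
  (forall j, (1 <= j)%nat -> (j <= L)%nat -> G (2 * L + 2 - j)%nat = G j) ->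
  sumR (2 * L + 1) (fun i => G (S i)) = 2 * sumR L (fun i => G (S i)) + G (S L).
Proof.
  intros H. replace (2 * L + 1)%nat with (S L + L)%nat by lia.
  rewrite sumR_add. simpl sumR at 1.
  rewrite <- (sumR_rev L (fun i => G (S i))).
  rewrite (sumR_ext L (fun i => G (S (S L + i))) (fun i => G (S (L - 1 - i)))); [ring|].
  intros i hi. rewrite <- (H (S (L - 1 - i))) by lia. f_equal. lia.
Qed.

Lemma INR_double_plus_2 L : INR (2 * L + 2) = 2 * INR L + 2.
Proof. rewrite plus_INR, mult_INR. simpl. ring. Qed.

Lemma cosec_term_symmetric L k j : (1 <= j)%nat -> (j <= L)%nat ->
  cosec_term (2 * L + 2) k (2 * L + 2 - j) = cosec_term (2 * L + 2) k j.
Proof.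
  intros h1 h2. unfold cosec_term. set (M := (2 * L + 2)%nat).
  assert (HM : 0 < INR M) by (apply lt_0_INR; unfold M; lia).
  rewrite minus_INR by (unfold M; lia).
  replace (2 * PI * (INR M - INR j) * INR k / INR M)
    with (- (2 * PI * INR j * INR k / INR M) + 2 * INR k * PI) by (field; lra).
  replace (PI * (INR M - INR j) / INR M) with (PI - PI * INR j / INR M) by (field; lra).
  rewrite cos_period, cos_neg, sin_PI_x. reflexivity.
Qed.

Lemma cosec_term_middle L k : Rabs (cosec_term (2 * L + 2) k (S L)) <= 1.
Proof.
  unfold cosec_term. pose proof (lt_0_INR (S L) ltac:(lia)).
  replace (PI * INR (S L) / INR (2 * L + 2)) with (PI / 2)
    by (rewrite INR_double_plus_2, S_INR in *; field; lra).
  rewrite sin_PI2, pow1. unfold Rdiv. rewrite Rinv_1, Rmult_1_r.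
  apply Rabs_le, COS_bound.
Qed.

Lemma cosec_term_approx L k j : (1 <= j)%nat -> (j <= L)%nat ->
  Rabs (cosec_term (2 * L + 2) k j / INR (2 * L + 2) ^ 2
        - cos_sq_term (INR k / INR (2 * L + 2)) j / PI ^ 2) <= 1 / INR (2 * L + 2) ^ 2.
Proof.
  intros h1 h2. unfold cosec_term, cos_sq_term. set (M := (2 * L + 2)%nat) in *.
  assert (HM : 0 < INR M) by (apply lt_0_INR; unfold M; lia).
  assert (Hj : 0 < INR j) by (apply lt_0_INR; lia).
  pose proof PI_RGT_0 as HP.
  set (y := PI * INR j / INR M).
  assert (Hy : 0 < y < PI / 2).
  { assert (INR j * 2 < INR M) by (unfold M; rewrite INR_double_plus_2; apply le_INR in h2; lra).
    unfold y; split; [apply Rdiv_lt_0_compat; nra|].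
    apply Rmult_lt_reg_r with (INR M); auto.
    replace (PI * INR j / INR M * INR M) with (PI * INR j) by (field; lra). nra. }
  pose proof (inv_sin_sq_sub_inv_sq y Hy) as [K1 K2].
  assert (hs : 0 < sin y) by (apply sin_gt_0; lra).
  set (A := 2 * PI * INR j * INR k / INR M).
  replace (2 * PI * INR j * (INR k / INR M)) with A by (unfold A; field; lra).
  replace (cos A / sin y ^ 2 / INR M ^ 2 - cos A / INR j ^ 2 / PI ^ 2)
    with (cos A * (/ sin y ^ 2 - / y ^ 2) / INR M ^ 2) by (unfold y; field; repeat split; try lra; fold y; lra).
  assert (Rabs (cos A) <= 1) by apply Rabs_le, COS_bound.
  unfold Rdiv. rewrite !Rabs_mult, (Rabs_pos_eq (/ sin y ^ 2 - / y ^ 2)) by lra.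
  rewrite (Rabs_pos_eq (/ INR M ^ 2)) by (apply Rlt_le, Rinv_0_lt_compat, pow_lt; lra).
  assert (0 < / INR M ^ 2) by (apply Rinv_0_lt_compat, pow_lt; lra).
  apply Rmult_le_compat_r; [lra|]. pose proof (Rabs_pos (cos A)). nra.
Qed.

Lemma cosec_sum_approx L k :
  Rabs (cosec_sum (2 * L + 2) k / INR (2 * L + 2) ^ 2
        - 2 / PI ^ 2 * cos_sq_sum L (INR k / INR (2 * L + 2))) <= 1 / INR (2 * L + 2).
Proof.
  set (M := (2 * L + 2)%nat).
  assert (EM : INR M = 2 * INR L + 2) by apply INR_double_plus_2.
  assert (HM : 0 < INR M) by (pose proof (pos_INR L); lra).
  pose proof PI_RGT_0 as HP.
  unfold cosec_sum. replace (M - 1)%nat with (2 * L + 1)%nat by (unfold M; lia).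
  rewrite (sumR_symmetric L (cosec_term M k)) by (intros; apply cosec_term_symmetric; lia).
  set (t := INR k / INR M).
  replace ((2 * sumR L (fun i => cosec_term M k (S i)) + cosec_term M k (S L)) / INR M ^ 2
           - 2 / PI ^ 2 * cos_sq_sum L t)
    with (2 * sumR L (fun i => cosec_term M k (S i) / INR M ^ 2 - cos_sq_term t (S i) / PI ^ 2)
          + cosec_term M k (S L) / INR M ^ 2)
    by (rewrite sumR_minus, !sumR_div; unfold cos_sq_sum; field; split; lra).
  assert (Hsum : Rabs (sumR L (fun i => cosec_term M k (S i) / INR M ^ 2 - cos_sq_term t (S i) / PI ^ 2))
                 <= INR L * (1 / INR M ^ 2)).
  { eapply Rle_trans; [apply Rabs_sumR_le|]. rewrite <- sumR_const.
    apply sumR_le. intros i hi. apply cosec_term_approx; lia. }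
  assert (Hmid : Rabs (cosec_term M k (S L) / INR M ^ 2) <= 1 / INR M ^ 2).
  { unfold Rdiv. rewrite Rabs_mult, (Rabs_pos_eq (/ INR M ^ 2))
      by (apply Rlt_le, Rinv_0_lt_compat, pow_lt; lra).
    pose proof (cosec_term_middle L k) as Hm. fold M in Hm.
    assert (0 < / INR M ^ 2) by (apply Rinv_0_lt_compat, pow_lt; lra). apply Rmult_le_compat_r; lra. }
  assert (2 * (INR L * (1 / INR M ^ 2)) + 1 / INR M ^ 2 <= 1 / INR M).
  { rewrite EM. pose proof (pos_INR L).
    apply Rmult_le_reg_r with ((2 * INR L + 2) ^ 2); [nra|]. field_simplify; nra. }
  eapply Rle_trans; [apply Rabs_triang|].
  rewrite Rabs_mult, (Rabs_pos_eq 2) by lra. lra.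
Qed.

Lemma second_diff_grid L l k : (2 * l <= k)%nat -> (k <= 2 * L + 2)%nat ->
  Rabs (second_diff (cos_sq_sum L) (2 * INR l / INR (2 * L + 2)) (INR k / INR (2 * L + 2))
        - PI ^ 2 * (2 * INR l / INR (2 * L + 2)) ^ 2 / 2) <= 2 * PI ^ 2 / INR (2 * L + 2).
Proof.
  intros h1 h2. set (M := (2 * L + 2)%nat) in *.
  assert (HM : 0 < INR M) by (apply lt_0_INR; unfold M; lia).
  assert (HP : 0 < PI ^ 2) by (apply pow_lt, PI_RGT_0).
  unfold second_diff.
  replace (INR k / INR M - 2 * INR l / INR M / 2) with ((INR k - INR l) / INR M) by (field; lra).
  replace (INR k / INR M - 2 * INR l / INR M) with ((INR k - 2 * INR l) / INR M) by (field; lra).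
  pose proof (cosec_sum_approx L k) as T1.
  pose proof (cosec_sum_approx L (k - l)) as T2.
  pose proof (cosec_sum_approx L (k - 2 * l)) as T3.
  fold M in T1, T2, T3.
  rewrite (cosec_sum_closed_form M k) in T1 by (unfold M in *; lia).
  rewrite (cosec_sum_closed_form M (k - l)) in T2 by (unfold M in *; lia).
  rewrite (cosec_sum_closed_form M (k - 2 * l)) in T3 by (unfold M in *; lia).
  rewrite !minus_INR in T2, T3 by lia. rewrite mult_INR in T3. replace (INR 2) with 2 in T3 by (simpl; ring).
  set (P := PI ^ 2) in *. set (c0 := cosec_sum M 0) in *.
  set (K := INR k) in *. set (Lr := INR l) in *. set (m := INR M) in *.
  set (F1 := cos_sq_sum L (K / m)) in *. set (F2 := cos_sq_sum L ((K - Lr) / m)) in *.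
  set (F3 := cos_sq_sum L ((K - 2 * Lr) / m)) in *.
  apply Rabs_le_inv in T1. apply Rabs_le_inv in T2. apply Rabs_le_inv in T3.
  replace (F1 - 2 * F2 + F3 - P * (2 * Lr / m) ^ 2 / 2) with
    (- (P / 2) * (((c0 - 2 * K * (m - K)) / m ^ 2 - 2 / P * F1)
                  - 2 * ((c0 - 2 * (K - Lr) * (m - (K - Lr))) / m ^ 2 - 2 / P * F2)
                  + ((c0 - 2 * (K - 2 * Lr) * (m - (K - 2 * Lr))) / m ^ 2 - 2 / P * F3)))
    by (field; lra).
  rewrite Rabs_mult, Rabs_Ropp, (Rabs_pos_eq (P / 2)) by lra.
  apply Rle_trans with (P / 2 * (4 / m)); [|right; field; lra].
  apply Rmult_le_compat_l; [lra|]. apply Rabs_le. split; unfold Rdiv in *; lra.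
Qed.

Lemma second_diff_cos_sq_sum N e x :
  second_diff (cos_sq_sum N) e x = sumR N (fun i => second_diff (fun t => cos_sq_term t (S i)) e x).
Proof. apply second_diff_sumR. Qed.

Lemma Rabs_cos_sq_term_le t j : (1 <= j)%nat -> Rabs (cos_sq_term t j) <= / INR j ^ 2.
Proof.
  intros hj. unfold cos_sq_term. assert (0 < INR j) by (apply lt_0_INR; lia).
  assert (0 < / INR j ^ 2) by (apply Rinv_0_lt_compat, pow_lt; lra).
  unfold Rdiv. rewrite Rabs_mult, (Rabs_pos_eq (/ INR j ^ 2)) by lra.
  rewrite <- (Rmult_1_l (/ INR j ^ 2)) at 2.
  apply Rmult_le_compat_r; [lra| apply Rabs_le, COS_bound].
Qed.

Lemma Rabs_second_diff_cos_sq_term_le e x j : (1 <= j)%nat ->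
  Rabs (second_diff (fun t => cos_sq_term t j) e x) <= 4 / INR j ^ 2.
Proof.
  intros hj. unfold second_diff.
  pose proof (Rabs_le_inv _ _ (Rabs_cos_sq_term_le x j hj)).
  pose proof (Rabs_le_inv _ _ (Rabs_cos_sq_term_le (x - e / 2) j hj)).
  pose proof (Rabs_le_inv _ _ (Rabs_cos_sq_term_le (x - e) j hj)).
  apply Rabs_le. unfold Rdiv. lra.
Qed.

Lemma sumR_inv_sq_tail N m : (1 <= N)%nat ->
  sumR m (fun i => / INR (N + 1 + i) ^ 2) <= / INR N - / INR (N + m).
Proof.
  intros HN. induction m as [|m IH]; cbn [sumR]; [rewrite Nat.add_0_r; lra|].
  pose proof (lt_0_INR (N + m) ltac:(lia)).
  replace (INR (N + 1 + m)) with (INR (N + m) + 1) by (rewrite !plus_INR; simpl; ring).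
  replace (INR (N + S m)) with (INR (N + m) + 1) by (rewrite Nat.add_succ_r, S_INR; ring).
  pose proof (inv_sq_le_telescope (INR (N + m)) ltac:(lra)). lra.
Qed.

Lemma second_diff_cos_sq_sum_tail N n e x : (1 <= N)%nat -> (N <= n)%nat ->
  Rabs (second_diff (cos_sq_sum n) e x - second_diff (cos_sq_sum N) e x) <= 4 / INR N.
Proof.
  intros h1 h2. replace n with (N + (n - N))%nat by lia.
  rewrite !second_diff_cos_sq_sum, sumR_add. set (m := (n - N)%nat).
  replace (_ + _ - _) with (sumR m (fun i => second_diff (fun t => cos_sq_term t (S (N + i))) e x))
    by ring.
  eapply Rle_trans; [apply Rabs_sumR_le|].
  eapply Rle_trans.
  { apply (sumR_le m _ (fun i => 4 * / INR (N + 1 + i) ^ 2)). intros i hi.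
    replace (N + 1 + i)%nat with (S (N + i)) by lia.
    apply Rabs_second_diff_cos_sq_term_le; lia. }
  rewrite sumR_scal. pose proof (sumR_inv_sq_tail N m h1).
  pose proof (lt_0_INR (N + m) ltac:(lia)).
  assert (0 < / INR (N + m)) by (apply Rinv_0_lt_compat; lra). unfold Rdiv. lra.
Qed.

Lemma second_diff_lipschitz (g : R -> R) K e x e' x' :
  (forall a b, Rabs (g a - g b) <= K * Rabs (a - b)) ->
  Rabs (second_diff g e x - second_diff g e' x') <= K * (4 * Rabs (x - x') + 2 * Rabs (e - e')).
Proof.
  intros Hg. unfold second_diff.
  pose proof (Hg x x') as H1. pose proof (Hg (x - e / 2) (x' - e' / 2)) as H2.
  pose proof (Hg (x - e) (x' - e')) as H3.
  assert (K0 : 0 <= K).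
  { specialize (Hg 1 0). pose proof (Rabs_pos (g 1 - g 0)).
    rewrite Rminus_0_r, Rabs_R1 in Hg. lra. }
  pose proof (Rabs_triang (x - x') (- (e - e') / 2)) as T2.
  replace (x - x' + - (e - e') / 2) with (x - e / 2 - (x' - e' / 2)) in T2 by field.
  replace (Rabs (- (e - e') / 2)) with (Rabs (e - e') / 2) in T2
    by (unfold Rdiv; rewrite Rabs_mult, Rabs_Ropp, (Rabs_pos_eq (/ 2)) by lra; reflexivity).
  pose proof (Rabs_triang (x - x') (- (e - e'))) as T3.
  replace (x - x' + - (e - e')) with (x - e - (x' - e')) in T3 by ring. rewrite Rabs_Ropp in T3.
  pose proof (Rabs_le_inv _ _ H1). pose proof (Rabs_le_inv _ _ H2). pose proof (Rabs_le_inv _ _ H3).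
  apply Rabs_le. nra.
Qed.

Lemma cos_sq_term_lipschitz j a b : (1 <= j)%nat ->
  Rabs (cos_sq_term a j - cos_sq_term b j) <= 2 * PI * Rabs (a - b).
Proof.
  intros hj. unfold cos_sq_term. pose proof PI_RGT_0 as HP.
  assert (h1 : 1 <= INR j) by (apply (le_INR 1); lia).
  replace (cos (2 * PI * INR j * a) / INR j ^ 2 - cos (2 * PI * INR j * b) / INR j ^ 2)
    with ((cos (2 * PI * INR j * a) - cos (2 * PI * INR j * b)) * / INR j ^ 2) by (field; lra).
  pose proof (cos_sub_Rabs_le (2 * PI * INR j * a) (2 * PI * INR j * b)) as Hc.
  replace (2 * PI * INR j * a - 2 * PI * INR j * b) with ((2 * PI * INR j) * (a - b)) in Hc by ring.
  rewrite Rabs_mult, (Rabs_pos_eq (2 * PI * INR j)) in Hc by nra.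
  rewrite Rabs_mult, (Rabs_pos_eq (/ INR j ^ 2)) by (apply Rlt_le, Rinv_0_lt_compat, pow_lt; lra).
  assert (Hinv : INR j * / INR j ^ 2 <= 1)
    by (replace (INR j * / INR j ^ 2) with (/ INR j) by (field; lra);
        rewrite <- Rinv_1; apply Rinv_le_contravar; lra).
  assert (0 < / INR j ^ 2) by (apply Rinv_0_lt_compat, pow_lt; lra).
  pose proof (Rabs_pos (a - b)).
  apply Rle_trans with (2 * PI * Rabs (a - b) * (INR j * / INR j ^ 2)).
  - replace (2 * PI * Rabs (a - b) * (INR j * / INR j ^ 2))
      with (2 * PI * INR j * Rabs (a - b) * / INR j ^ 2) by ring.
    apply Rmult_le_compat_r; lra.
  - rewrite <- (Rmult_1_r (2 * PI * Rabs (a - b))) at 2. apply Rmult_le_compat_l; nra.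
Qed.

Lemma second_diff_cos_sq_sum_lipschitz N e x e' x' :
  Rabs (second_diff (cos_sq_sum N) e x - second_diff (cos_sq_sum N) e' x')
  <= INR N * (2 * PI * (4 * Rabs (x - x') + 2 * Rabs (e - e'))).
Proof.
  rewrite !second_diff_cos_sq_sum, <- sumR_minus, <- sumR_const.
  eapply Rle_trans; [apply Rabs_sumR_le|]. apply sumR_le. intros i _.
  apply second_diff_lipschitz. intros a b. apply cos_sq_term_lipschitz. lia.
Qed.

Lemma grid_points_near L e x : 0 <= e <= x -> x <= 1 ->
  exists l k, (2 * l <= k)%nat /\ (k <= 2 * L + 2)%nat /\
    Rabs (x - INR k / INR (2 * L + 2)) <= 1 / INR (2 * L + 2) /\
    0 <= 2 * INR l / INR (2 * L + 2) /\ 0 <= e - 2 * INR l / INR (2 * L + 2) <= 2 / INR (2 * L + 2).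
Proof.
  intros [He Hex] Hx. set (M := (2 * L + 2)%nat).
  assert (HM : INR M = 2 * (INR L + 1)) by (unfold M; rewrite INR_double_plus_2; ring).
  pose proof (pos_INR L).
  destruct (floor_nat ((INR L + 1) * e)) as [l [Hl1 Hl2]]; [nra|].
  destruct (floor_nat (INR M * x)) as [k [Hk1 Hk2]]; [nra|].
  exists l, k. pose proof (pos_INR l). pose proof (pos_INR k).
  repeat split.
  - assert (INR (2 * l) < INR (k + 1)) by (rewrite mult_INR, plus_INR; simpl; nra).
    apply INR_lt in H2. lia.
  - apply INR_le. fold M. nra.
  - apply Rabs_le. split; apply Rmult_le_reg_r with (INR M); try lra;
      field_simplify; nra.
  - rewrite HM. apply Rmult_le_pos; [lra|]. apply Rlt_le, Rinv_0_lt_compat; lra.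
  - rewrite HM. apply Rmult_le_reg_r with (INR L + 1); [lra|]. field_simplify; lra.
  - rewrite HM. apply Rmult_le_reg_r with (INR L + 1); [lra|]. field_simplify; lra.
Qed.

Lemma second_diff_cos_sq_sum_lower N e x : (1 <= N)%nat -> 0 < e <= 1 -> e <= x <= 1 ->
  PI ^ 2 * e ^ 2 / 2 - 4 / INR N <= second_diff (cos_sq_sum N) e x.
Proof.
  intros HN He Hx. pose proof PI_RGT_0 as HP.
  assert (hN : 1 <= INR N) by (apply (le_INR 1); lia).
  apply (le_of_forall_sub_inv _ _ (16 * PI * INR N + 4 * PI ^ 2)). intros n Hn.
  set (L := (n + N)%nat). set (M := (2 * L + 2)%nat).
  assert (HnM : INR n <= INR M) by (apply le_INR; unfold M, L; lia).
  assert (Hn0 : 0 < INR n) by (apply lt_0_INR; lia).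
  destruct (grid_points_near L e x ltac:(lra) ltac:(lra))
    as [l [k [Hlk [HkM [Hdx [He'0 Hde]]]]]]; fold M in Hdx, He'0, Hde, HkM.
  set (e' := 2 * INR l / INR M) in *. set (x' := INR k / INR M) in *.
  pose proof (Rabs_le_inv _ _ (second_diff_grid L l k Hlk HkM)) as G. fold M e' x' in G.
  pose proof (Rabs_le_inv _ _ (second_diff_cos_sq_sum_tail N L e' x' HN ltac:(unfold L; lia))) as T.
  pose proof (Rabs_le_inv _ _ (second_diff_cos_sq_sum_lipschitz N e x e' x')) as C.
  rewrite (Rabs_pos_eq (e - e')) in C by lra.
  assert (Hq : e ^ 2 - e' ^ 2 <= 4 / INR M).
  { replace (e ^ 2 - e' ^ 2) with ((e - e') * (e + e')) by ring.
    apply Rle_trans with ((2 / INR M) * 2); [apply Rmult_le_compat; lra| lra]. }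
  assert (Hrate : (16 * PI * INR N + 4 * PI ^ 2) / INR M <= (16 * PI * INR N + 4 * PI ^ 2) / INR n).
  { apply Rmult_le_compat_l; [nra|]. apply Rinv_le_contravar; lra. }
  assert (Hsplit : (16 * PI * INR N + 4 * PI ^ 2) / INR M
                   = INR N * (2 * PI * (4 * (1 / INR M) + 2 * (2 / INR M)))
                     + 2 * PI ^ 2 / INR M + PI ^ 2 / 2 * (4 / INR M)) by (field; lra).
  assert (INR N * (2 * PI * (4 * Rabs (x - x') + 2 * (e - e')))
          <= INR N * (2 * PI * (4 * (1 / INR M) + 2 * (2 / INR M)))).
  { apply Rmult_le_compat_l; [lra|]. apply Rmult_le_compat_l; lra. }
  assert (PI ^ 2 / 2 * (e ^ 2 - e' ^ 2) <= PI ^ 2 / 2 * (4 / INR M))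
    by (apply Rmult_le_compat_l; [nra| lra]).
  lra.
Qed.

(** * Fourier coefficients of the second difference *)

(* [coef_cos e j - i coef_sin e j = (1 - exp (- i PI j e))^2 / j^2], the [j]-th Fourier
   coefficient of [second_diff (cos_sq_sum N) e]; its modulus is [coef_norm e j]. *)
Definition coef_cos (e : R) (j : nat) : R :=
  (1 - 2 * cos (PI * INR j * e) + cos (2 * PI * INR j * e)) / INR j ^ 2.
Definition coef_sin (e : R) (j : nat) : R :=
  (- 2 * sin (PI * INR j * e) + sin (2 * PI * INR j * e)) / INR j ^ 2.
Definition coef_norm (e : R) (j : nat) : R := 4 * sin (PI * INR j * e / 2) ^ 2 / INR j ^ 2.

Lemma second_diff_cos_sq_term e x j : (1 <= j)%nat ->
  second_diff (fun t => cos_sq_term t j) e x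
  = coef_cos e j * cos (2 * PI * INR j * x) + coef_sin e j * sin (2 * PI * INR j * x).
Proof.
  intros hj. assert (0 < INR j) by (apply lt_0_INR; lia).
  unfold second_diff, cos_sq_term, coef_cos, coef_sin.
  replace (2 * PI * INR j * (x - e / 2)) with (2 * PI * INR j * x - PI * INR j * e) by field.
  replace (2 * PI * INR j * (x - e)) with (2 * PI * INR j * x - 2 * PI * INR j * e) by ring.
  rewrite !cos_minus. field. lra.
Qed.

Lemma coef_cos_sq_add_coef_sin_sq e j : (1 <= j)%nat ->
  coef_cos e j ^ 2 + coef_sin e j ^ 2 = coef_norm e j ^ 2.
Proof.
  intros hj. assert (hJ : INR j <> 0) by (apply not_0_INR; lia).
  unfold coef_cos, coef_sin, coef_norm. set (t := PI * INR j * e / 2).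
  replace (PI * INR j * e) with (2 * t) by (unfold t; field).
  replace (2 * PI * INR j * e) with (2 * (2 * t)) by (unfold t; field).
  rewrite !sin_2a, !cos_2a, !sin_2a.
  pose proof (sin2_cos2 t) as Hsc. unfold Rsqr in Hsc.
  set (s := sin t) in *. set (c := cos t) in *. set (J := INR j) in *.
  assert (Hc : c * c = 1 - s * s) by lra.
  replace (2 * s * c * (2 * s * c)) with (4 * s ^ 2 * (c * c)) by ring.
  replace (((-2 * (2 * s * c) + 2 * (2 * s * c) * (c * c - s * s)) / J ^ 2) ^ 2)
    with (16 * s ^ 2 * (c * c) * (c * c - s * s - 1) ^ 2 / J ^ 4) by (field; auto).
  rewrite Hc. field. exact hJ.
Qed.

Lemma coef_norm_nonneg e j : 0 <= coef_norm e j.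
Proof.
  unfold coef_norm, Rdiv. apply Rmult_le_pos; [nra|].
  destruct j as [|j]; [simpl; rewrite Rmult_0_l, Rinv_0; lra|].
  apply Rlt_le, Rinv_0_lt_compat, pow_lt, lt_0_INR; lia.
Qed.

Lemma coef_lin_comb_le e j C S : (1 <= j)%nat ->
  coef_cos e j * C + coef_sin e j * S <= coef_norm e j * sqrt (C ^ 2 + S ^ 2).
Proof.
  intros hj. pose proof (coef_cos_sq_add_coef_sin_sq e j hj) as Hab.
  pose proof (coef_norm_nonneg e j).
  set (a := coef_cos e j) in *. set (b := coef_sin e j) in *. set (w := coef_norm e j) in *.
  assert (Hq : 0 <= C ^ 2 + S ^ 2) by nra.
  pose proof (sqrt_pos (C ^ 2 + S ^ 2)). pose proof (sqrt_sqrt (C ^ 2 + S ^ 2) Hq) as Hr.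
  set (r := sqrt (C ^ 2 + S ^ 2)) in *.
  assert ((a * C + b * S) ^ 2 <= (w * r) ^ 2).
  { replace ((w * r) ^ 2) with ((a ^ 2 + b ^ 2) * (r * r)) by (rewrite Hab; ring).
    rewrite Hr. pose proof (pow2_ge_0 (a * S - b * C)). nra. }
  assert (0 <= w * r) by nra. nra.
Qed.

Lemma coef_norm_le_small e j : (1 <= j)%nat -> coef_norm e j <= PI ^ 2 * e ^ 2.
Proof.
  intros hj. assert (0 < INR j) by (apply lt_0_INR; lia). unfold coef_norm.
  pose proof (Rsqr_le_abs_1 _ _ (Rabs_sin_le (PI * INR j * e / 2))) as Hs. unfold Rsqr in Hs.
  apply Rmult_le_reg_r with (INR j ^ 2); [apply pow_lt; lra|].
  unfold Rdiv. rewrite Rmult_assoc, Rinv_l by (apply pow_nonzero; lra). nra.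
Qed.

Lemma coef_norm_le_large e j : (1 <= j)%nat -> coef_norm e j <= 4 / INR j ^ 2.
Proof.
  intros hj. assert (0 < INR j) by (apply lt_0_INR; lia). unfold coef_norm, Rdiv.
  apply Rmult_le_compat_r; [apply Rlt_le, Rinv_0_lt_compat, pow_lt; lra|].
  pose proof (SIN_bound (PI * INR j * e / 2)). nra.
Qed.

(* Split at [J ~ 2 / (PI e)]: below [J] use [coef_norm <= PI^2 e^2], above it [4 / j^2]. *)
Lemma sumR_coef_norm_le e N : 0 < e <= 1 ->
  sumR N (fun i => coef_norm e (S i)) <= 4 * PI * e + PI ^ 2 * e ^ 2.
Proof.
  intros He. pose proof PI_RGT_0 as HP. assert (Hpe : 0 < PI * e) by nra.
  destruct (floor_nat (2 / (PI * e))) as [J0 [HJ1 HJ2]]; [apply Rlt_le, Rdiv_lt_0_compat; lra|].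
  set (J := S J0).
  assert (HJ : 2 / (PI * e) < INR J <= 2 / (PI * e) + 1) by (unfold J; rewrite S_INR; lra).
  assert (hJ1 : 1 <= INR J) by (apply (le_INR 1); unfold J; lia).
  assert (Hhead : sumR J (fun i => coef_norm e (S i)) <= 2 * PI * e + PI ^ 2 * e ^ 2).
  { eapply Rle_trans.
    { apply (sumR_le _ _ (fun _ => PI ^ 2 * e ^ 2)). intros; apply coef_norm_le_small; lia. }
    rewrite sumR_const.
    replace (2 * PI * e + PI ^ 2 * e ^ 2) with ((2 / (PI * e) + 1) * (PI ^ 2 * e ^ 2)) by (field; lra).
    apply Rmult_le_compat_r; nra. }
  assert (Htail : sumR N (fun i => coef_norm e (S (J + i))) <= 4 / INR J).
  { eapply Rle_trans.
    { apply (sumR_le _ _ (fun i => 4 * / INR (J + 1 + i) ^ 2)). intros i _.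
      replace (J + 1 + i)%nat with (S (J + i)) by lia. apply coef_norm_le_large; lia. }
    rewrite sumR_scal. pose proof (sumR_inv_sq_tail J N ltac:(unfold J; lia)).
    assert (0 < / INR (J + N)) by (apply Rinv_0_lt_compat, lt_0_INR; lia). unfold Rdiv. lra. }
  assert (4 / INR J <= 2 * PI * e).
  { apply Rmult_le_reg_r with (INR J); [lra|]. unfold Rdiv. rewrite Rmult_assoc, Rinv_l by lra.
    apply Rmult_le_reg_r with (/ (PI * e)); [apply Rinv_0_lt_compat; lra|].
    replace (2 * PI * e * INR J * / (PI * e)) with (2 * INR J) by (field; lra).
    unfold Rdiv in HJ. lra. }
  eapply Rle_trans; [apply (sumR_le_add N J); intros; apply coef_norm_nonneg|].
  rewrite sumR_add. lra.
Qed.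

(** * Borel sets, measures and simple integrals *)

Lemma pred_ext (A B : R -> Prop) : (forall x, A x <-> B x) -> A = B.
Proof.
  intros H. apply functional_extensionality. intros x. apply propositional_extensionality. auto.
Qed.

Lemma borel_ext A B : (forall x, A x <-> B x) -> borel A -> borel B.
Proof. intros H. rewrite (pred_ext A B H). auto. Qed.

Lemma borel_lt b : borel (fun x => x < b).
Proof.
  apply borel_open. intros x hx. exists (mkposreal (b - x) ltac:(lra)).
  intros y hy. unfold disc in hy. simpl in hy. apply Rabs_def2 in hy. lra.
Qed.

Lemma borel_gt a : borel (fun x => a < x).
Proof.
  apply borel_open. intros x hx. exists (mkposreal (x - a) ltac:(lra)).
  intros y hy. unfold disc in hy. simpl in hy. apply Rabs_def2 in hy. lra.
Qed.

Lemma borel_True : borel (fun _ => True).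
Proof. apply borel_open. intros x _. exists (mkposreal 1 ltac:(lra)). intros y _. exact I. Qed.

Lemma borel_False : borel (fun _ => False).
Proof. apply borel_open. intros x []. Qed.

Lemma borel_or A B : borel A -> borel B -> borel (fun x => A x \/ B x).
Proof.
  intros HA HB. apply (borel_ext (fun x => exists n, (match n with O => A | _ => B end) x)).
  - intros x; split; [intros [[|n] H]; auto|].
    intros [H|H]; [exists O|exists 1%nat]; auto.
  - apply borel_cunion. intros [|n]; auto.
Qed.

Lemma borel_and A B : borel A -> borel B -> borel (fun x => A x /\ B x).
Proof.
  intros HA HB. apply (borel_ext (fun x => ~ (~ A x \/ ~ B x))).
  - intros x; split; [|tauto]. intros H. apply not_or_and in H.
    destruct H; split; apply NNPP; auto.
  - apply borel_compl, borel_or; apply borel_compl; auto.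
Qed.

Lemma borel_ge a : borel (fun x => a <= x).
Proof. apply (borel_ext (fun x => ~ x < a)); [intros; lra| apply borel_compl, borel_lt]. Qed.

Lemma borel_le b : borel (fun x => x <= b).
Proof. apply (borel_ext (fun x => ~ b < x)); [intros; lra| apply borel_compl, borel_gt]. Qed.

Lemma borel_eq a : borel (fun x => x = a).
Proof.
  apply (borel_ext (fun x => a <= x /\ x <= a)); [intros; lra|].
  apply borel_and; [apply borel_ge| apply borel_le].
Qed.

Fixpoint lsum {A} (F : A -> R) (l : list A) : R :=
  match l with [] => 0 | a :: l => F a + lsum F l end.

Lemma lsum_ext_in {A} (F G : A -> R) l : (forall a, In a l -> F a = G a) -> lsum F l = lsum G l.
Proof.
  induction l as [|a l IH]; intros H; simpl; auto.
  rewrite H by (left; auto). rewrite IH; auto. intros b hb. apply H. right; auto.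
Qed.

Lemma lsum_le_in {A} (F G : A -> R) l : (forall a, In a l -> F a <= G a) -> lsum F l <= lsum G l.
Proof.
  induction l as [|a l IH]; intros H; simpl; [lra|].
  pose proof (H a (or_introl eq_refl)). pose proof (IH (fun b hb => H b (or_intror hb))). lra.
Qed.

Lemma lsum_plus {A} (F G : A -> R) l : lsum (fun a => F a + G a) l = lsum F l + lsum G l.
Proof. induction l; simpl; [lra|]. rewrite IHl; ring. Qed.

Lemma lsum_scal {A} c (F : A -> R) l : lsum (fun a => c * F a) l = c * lsum F l.
Proof. induction l; simpl; [lra|]. rewrite IHl; ring. Qed.

Lemma lsum_swap {A B} (G : A -> B -> R) l u :
  lsum (fun a => lsum (fun b => G a b) u) l = lsum (fun b => lsum (fun a => G a b) l) u.
Proof.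
  induction l; simpl.
  - induction u; simpl; auto. rewrite <- IHu; ring.
  - rewrite IHl, <- lsum_plus. reflexivity.
Qed.

Lemma lsum_map {A B} (F : B -> R) (f : A -> B) l : lsum F (map f l) = lsum (fun a => F (f a)) l.
Proof. induction l; simpl; auto. rewrite IHl; auto. Qed.

Lemma simple_integral_lsum mu l : simple_integral mu l = lsum (fun p => snd p * mu (fst p)) l.
Proof. induction l; simpl; auto. rewrite <- IHl. reflexivity. Qed.

Section FiniteMeasure.

Variable mu : (R -> Prop) -> R.
Hypothesis Hmu : finite_borel_measure mu.

Lemma measure_ext A B : (forall x, A x <-> B x) -> mu A = mu B.
Proof. intros H. rewrite (pred_ext A B H). reflexivity. Qed.

Lemma measure_empty A : (forall x, ~ A x) -> mu A = 0.
Proof.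
  intros H. destruct Hmu as [_ [H0 _]]. rewrite <- H0.
  apply measure_ext. intros x; split; [apply H| intros []].
Qed.

Lemma measure_nonneg A : borel A -> 0 <= mu A.
Proof. destruct Hmu as [H _]. auto. Qed.

Lemma measure_union2 A B : borel A -> borel B -> (forall x, A x -> B x -> False) ->
  mu (fun x => A x \/ B x) = mu A + mu B.
Proof.
  intros HA HB Hd. destruct Hmu as [_ [H0 Hc]].
  set (sq := fun n : nat => match n with O => A | 1%nat => B | _ => fun _ => False end).
  assert (Hb : forall n, borel (sq n)) by (intros [|[|n]]; simpl; auto using borel_False).
  assert (Hdj : forall n m x, n <> m -> sq n x -> sq m x -> False)
    by (intros [|[|n]] [|[|m]] x hnm h1 h2; simpl in *; eauto).
  assert (Hsum : infinite_sum (fun n => mu (sq n)) (mu A + mu B)).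
  { intros eps heps. exists 1%nat. intros n hn.
    replace (sum_f_R0 (fun n => mu (sq n)) n) with (mu A + mu B).
    { unfold R_dist. rewrite Rminus_diag, Rabs_R0. auto. }
    induction n as [|n IH]; [lia|]. destruct n; [reflexivity|].
    simpl sum_f_R0. simpl in IH. rewrite <- IH by lia. simpl. rewrite H0. ring. }
  rewrite <- (uniqueness_sum _ _ _ (Hc sq Hb Hdj) Hsum).
  apply measure_ext. intros x; split.
  - intros [h|h]; [exists O|exists 1%nat]; auto.
  - intros [[|[|n]] h]; simpl in h; auto. destruct h.
Qed.

Lemma measure_split A (u : list ((R -> Prop) * R)) :
  Forall (fun p => borel (fst p)) u ->
  ForallOrdPairs (fun p q => forall x, fst p x -> fst q x -> False) u ->
  borel A -> (forall x, A x -> exists q, In q u /\ fst q x) ->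
  mu A = lsum (fun q => mu (fun x => A x /\ fst q x)) u.
Proof.
  revert A; induction u as [|p u IH]; intros A Hb Hd HA Hc; simpl.
  { apply measure_empty. intros x hx. destruct (Hc x hx) as [q [[] _]]. }
  inversion Hb as [|? ? Hp Hb']; subst. inversion Hd as [|? ? Hpu Hd']; subst.
  assert (HAp : borel (fun x => A x /\ ~ fst p x)) by (apply borel_and, borel_compl; auto).
  rewrite (measure_ext A (fun x => (A x /\ fst p x) \/ (A x /\ ~ fst p x)))
    by (intros x; destruct (classic (fst p x)); tauto).
  rewrite measure_union2; [| apply borel_and; auto| exact HAp| intros x [_ h1] [_ h2]; auto].
  f_equal. rewrite (IH (fun x => A x /\ ~ fst p x)); auto.
  - apply lsum_ext_in. intros q hq. rewrite Forall_forall in Hpu.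
    apply measure_ext. intros x; split; [tauto|].
    intros [h1 h2]. repeat split; auto. intros h3. exact (Hpu q hq x h3 h2).
  - intros x [h1 h2]. destruct (Hc x h1) as [q [[<-|hq] hx]]; [contradiction| eauto].
Qed.

Lemma simple_integral_below_le_above f l u :
  simple_partition l -> simple_partition u -> simple_below f l -> simple_above f u ->
  simple_integral mu l <= simple_integral mu u.
Proof.
  intros [Lb [Ld Lc]] [Ub [Ud Uc]] Hl Hu. rewrite !simple_integral_lsum.
  rewrite (lsum_ext_in _ (fun p => lsum (fun q => snd p * mu (fun x => fst p x /\ fst q x)) u) l).
  2:{ intros p hp. rewrite Forall_forall in Lb. rewrite lsum_scal, <- measure_split; auto. }
  rewrite (lsum_ext_in _ (fun q => lsum (fun p => snd q * mu (fun x => fst p x /\ fst q x)) l) u).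
  2:{ intros q hq. rewrite Forall_forall in Ub. rewrite lsum_scal, (measure_split (fst q) l); auto.
      f_equal. apply lsum_ext_in. intros p _. apply measure_ext. tauto. }
  rewrite <- (lsum_swap (fun p q => snd q * mu (fun x => fst p x /\ fst q x))).
  apply lsum_le_in. intros p hp. apply lsum_le_in. intros q hq.
  unfold simple_below, simple_above in Hl, Hu. rewrite Forall_forall in Lb, Ub, Hl, Hu.
  destruct (classic (exists x, fst p x /\ fst q x)) as [[x [h1 h2]]|hn].
  - apply Rmult_le_compat_r; [apply measure_nonneg, borel_and; auto|].
    pose proof (Hl p hp x h1). pose proof (Hu q hq x h2). lra.
  - rewrite measure_empty; [lra|]. intros x hx. apply hn; eauto.
Qed.

End FiniteMeasure.

Definition set_partition (L : list (R -> Prop)) : Prop :=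
  Forall borel L /\ ForallOrdPairs (fun P Q => forall x, P x -> Q x -> False) L /\
  (forall x, exists P, In P L /\ P x).

Lemma ForallOrdPairs_map {A B} (Rl : B -> B -> Prop) (f : A -> B) l :
  ForallOrdPairs (fun p q => Rl (f p) (f q)) l <-> ForallOrdPairs Rl (map f l).
Proof.
  induction l as [|a l IH]; simpl; split; intros H; try constructor; inversion H; subst.
  - rewrite Forall_map. auto.
  - apply IH; auto.
  - rewrite Forall_map in *. auto.
  - apply IH; auto.
Qed.

Lemma ForallOrdPairs_map_seq {A} (Rl : A -> A -> Prop) (F : nat -> A) m s :
  (forall i j, (i < j)%nat -> Rl (F i) (F j)) -> ForallOrdPairs Rl (map F (seq s m)).
Proof.
  intros H. revert s; induction m; intros s; simpl; constructor; auto.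
  rewrite Forall_map, Forall_forall. intros j hj. apply in_seq in hj. apply H. lia.
Qed.

Lemma ForallOrdPairs_app_singleton {A} (Rl : A -> A -> Prop) l e :
  ForallOrdPairs Rl l -> (forall p, In p l -> Rl p e) -> ForallOrdPairs Rl (l ++ [e]).
Proof.
  induction l as [|p l IH]; intros H1 H2; simpl; [repeat constructor|].
  inversion H1; subst. constructor.
  - apply Forall_app. split; auto. constructor; [apply H2; left; auto| constructor].
  - apply IH; auto. intros; apply H2; right; auto.
Qed.

Lemma simple_partition_iff l : simple_partition l <-> set_partition (map fst l).
Proof.
  unfold simple_partition, set_partition. rewrite Forall_map, <- ForallOrdPairs_map.
  split; intros [A [B C]]; repeat split; auto; intros x; destruct (C x) as [p [hp hx]].
  - exists (fst p). split; auto. apply in_map; auto.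
  - apply in_map_iff in hp. destruct hp as [q [<- hq]]. eauto.
Qed.

Lemma set_partition_single : set_partition [fun _ => True].
Proof.
  split; [constructor; [apply borel_True| constructor]|].
  split; [repeat constructor|]. intros x. exists (fun _ => True). simpl; auto.
Qed.

(** * Riemann sums of Lipschitz integrands *)

Section RiemannSums.

Variable mu : (R -> Prop) -> R.
Variables a b : R.
Hypothesis Hmu : borel_probability_measure mu.
Hypothesis Hab : a <= b.
Hypothesis Hsupp : mu (fun x => a <= x <= b) = 1.

Definition outside : R -> Prop := fun x => x < a \/ b < x.

Definition mesh (n : nat) : R := (b - a) / INR n.

Definition node (n k : nat) : R := a + INR k * mesh n.

Definition cell (n k : nat) : (R -> Prop) * R := ((fun x => node n k <= x < node n (S k)), node n k).

Definition tagged_cells (n : nat) : list ((R -> Prop) * R) :=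
  map (cell n) (seq 0 n) ++ [((fun x => x = b), b)].

Definition grid_partition (n : nat) : list ((R -> Prop) * R) := (outside, 0) :: tagged_cells n.

Definition riemann_sum (n : nat) (f : R -> R) : R :=
  lsum (fun p => f (snd p) * mu (fst p)) (tagged_cells n).

Lemma borel_outside : borel outside.
Proof. apply borel_or; [apply borel_lt| apply borel_gt]. Qed.

Lemma measure_outside : mu outside = 0.
Proof.
  destruct Hmu as [Hf HT].
  assert (mu (fun _ => True) = mu (fun x => a <= x <= b) + mu outside); [|lra].
  rewrite <- measure_union2; auto using borel_outside.
  - apply measure_ext. unfold outside. intros x; split; auto. intros _.
    destruct (Rlt_dec x a); [tauto|]. destruct (Rlt_dec b x); [tauto|]. left; lra.
  - apply borel_and; [apply borel_ge| apply borel_le].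
  - unfold outside. intros x h1 [h2|h2]; lra.
Qed.

Lemma mesh_nonneg n : 0 <= mesh n.
Proof.
  unfold mesh, Rdiv. apply Rmult_le_pos; [lra|].
  destruct n; [simpl; rewrite Rinv_0; lra| apply Rlt_le, Rinv_0_lt_compat, lt_0_INR; lia].
Qed.

Lemma node_le n i j : (i <= j)%nat -> node n i <= node n j.
Proof.
  intros hij. unfold node. apply le_INR in hij. pose proof (mesh_nonneg n).
  apply Rplus_le_compat_l, Rmult_le_compat_r; auto.
Qed.

Lemma node_0 n : node n 0 = a.
Proof. unfold node. simpl. ring. Qed.

Lemma node_last n : (1 <= n)%nat -> node n n = b.
Proof. intros hn. unfold node, mesh. field. apply not_0_INR; lia. Qed.

Lemma tagged_cells_spec n p : (1 <= n)%nat -> In p (tagged_cells n) ->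
  a <= snd p <= b /\ forall x, fst p x -> Rabs (x - snd p) <= mesh n.
Proof.
  intros hn hp. unfold tagged_cells in hp. apply in_app_or in hp. destruct hp as [hp|[<-|[]]].
  - apply in_map_iff in hp. destruct hp as [k [<- hk]]. apply in_seq in hk. simpl.
    pose proof (node_le n 0 k ltac:(lia)). pose proof (node_le n k n ltac:(lia)).
    rewrite node_0 in *. rewrite node_last in * by auto. split; [lra|].
    intros x [h1 h2]. unfold node in *. rewrite S_INR in h2. apply Rabs_le. lra.
  - simpl. split; [lra|]. intros x ->. rewrite Rminus_diag, Rabs_R0. apply mesh_nonneg.
Qed.

Lemma cell_index n x : (1 <= n)%nat -> a <= x < b ->
  exists k, (k < n)%nat /\ node n k <= x < node n (S k).
Proof.
  intros hn [h1 h2].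
  assert (Hn : 0 < INR n) by (apply lt_0_INR; lia).
  assert (hpos : 0 < mesh n) by (apply Rdiv_lt_0_compat; lra).
  destruct (floor_nat ((x - a) / mesh n)) as [k [hk1 hk2]].
  { apply Rmult_le_pos; [lra| apply Rlt_le, Rinv_0_lt_compat; lra]. }
  apply Rmult_le_compat_r with (r := mesh n) in hk1; [|lra].
  apply Rmult_lt_compat_r with (r := mesh n) in hk2; [|lra].
  replace ((x - a) / mesh n * mesh n) with (x - a) in hk1, hk2 by (field; lra).
  exists k. unfold node. rewrite S_INR. split; [|lra].
  apply INR_lt. apply Rmult_lt_reg_r with (mesh n); [lra|].
  replace (INR n * mesh n) with (b - a) by (unfold mesh; field; lra). lra.
Qed.

Lemma grid_partition_sets n : (1 <= n)%nat -> set_partition (map fst (grid_partition n)).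
Proof.
  intros hn. apply simple_partition_iff. unfold grid_partition, tagged_cells.
  pose proof (node_0 n) as E0. pose proof (node_last n hn) as En.
  repeat split.
  - constructor; [apply borel_outside|]. apply Forall_app. split.
    + rewrite Forall_map, Forall_forall. intros k _. apply borel_and; [apply borel_ge| apply borel_lt].
    + constructor; [apply borel_eq| constructor].
  - constructor.
    + apply Forall_app. split.
      * rewrite Forall_map, Forall_forall. intros k hk. apply in_seq in hk. simpl.
        pose proof (node_le n 0 k ltac:(lia)). pose proof (node_le n (S k) n ltac:(lia)).
        unfold outside. intros x hx [h1 h2]. lra.
      * constructor; [|constructor]. simpl. unfold outside. intros x hx ->. lra.
    + apply ForallOrdPairs_app_singleton.
      * apply ForallOrdPairs_map_seq. intros i j hij. simpl. intros x [h1 h2] [h3 h4].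
        pose proof (node_le n (S i) j hij). lra.
      * intros p hp. apply in_map_iff in hp. destruct hp as [k [<- hk]]. apply in_seq in hk.
        simpl. intros x [h1 h2] ->. pose proof (node_le n (S k) n ltac:(lia)). lra.
  - intros x. destruct (classic (outside x)) as [ho|ho].
    { exists (outside, 0). simpl; auto. }
    unfold outside in ho. destruct (Req_dec x b) as [->|hb].
    { exists ((fun x => x = b), b). split; [|reflexivity]. right. apply in_or_app. simpl; auto. }
    destruct (cell_index n x hn ltac:(lra)) as [k [hk hx]].
    exists (cell n k). split; [|exact hx]. right. apply in_or_app. left.
    apply in_map, in_seq. lia.
Qed.

Lemma grid_partition_simple n : (1 <= n)%nat -> simple_partition (grid_partition n).
Proof. intros hn. apply simple_partition_iff, grid_partition_sets, hn. Qed.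

Lemma tagged_cells_mass n : (1 <= n)%nat -> lsum (fun p => mu (fst p)) (tagged_cells n) = 1.
Proof.
  intros hn. destruct (grid_partition_simple n hn) as [Hb [Hd Hc]]. destruct Hmu as [Hf HT].
  rewrite <- HT, (measure_split mu Hf (fun _ => True) (grid_partition n) Hb Hd borel_True)
    by (intros x _; apply Hc).
  simpl. rewrite (measure_ext mu (fun x => True /\ outside x) outside), measure_outside by tauto.
  rewrite Rplus_0_l. apply lsum_ext_in. intros p _. apply measure_ext. tauto.
Qed.

Lemma riemann_sum_lower n g m : (1 <= n)%nat -> (forall t, a <= t <= b -> m <= g t) ->
  m <= riemann_sum n g.
Proof.
  intros hn Hg. rewrite <- (Rmult_1_r m), <- (tagged_cells_mass n hn).
  unfold riemann_sum. rewrite <- lsum_scal. apply lsum_le_in. intros p hp.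
  destruct (tagged_cells_spec n p hn hp) as [h _].
  destruct (grid_partition_simple n hn) as [Hb _]. rewrite Forall_forall in Hb.
  apply Rmult_le_compat_r; [apply (measure_nonneg mu (proj1 Hmu)), Hb; right; auto| auto].
Qed.

Lemma riemann_sum_lin n f g c d :
  riemann_sum n (fun t => c * f t + d * g t) = c * riemann_sum n f + d * riemann_sum n g.
Proof. unfold riemann_sum. rewrite <- !lsum_scal, <- lsum_plus. apply lsum_ext_in; intros; ring. Qed.

Lemma riemann_sum_sumR n N (F : nat -> R -> R) :
  riemann_sum n (fun t => sumR N (fun i => F i t)) = sumR N (fun i => riemann_sum n (F i)).
Proof.
  induction N as [|N IH]; unfold riemann_sum in *; simpl.
  - induction (tagged_cells n); simpl; auto. rewrite IHl; ring.
  - rewrite <- IH, <- lsum_plus. apply lsum_ext_in; intros; ring.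
Qed.

Lemma riemann_sum_ext n f g : (forall t, f t = g t) -> riemann_sum n f = riemann_sum n g.
Proof. intros H. unfold riemann_sum. apply lsum_ext_in. intros; rewrite H; auto. Qed.

Section LipschitzIntegrand.

Variable f : R -> R.
Variables B K : R.
Hypothesis HK : 0 <= K.
Hypothesis Hlip : forall x y, Rabs (f x - f y) <= K * Rabs (x - y).
Hypothesis Hbd : forall x, Rabs (f x) <= B.

(* The value [c] taken on [outside] only matters for [simple_below]/[simple_above]:
   [outside] is [mu]-null. *)
Definition shifted_cells (n : nat) (c d : R) : list ((R -> Prop) * R) :=
  (outside, c) :: map (fun p => (fst p, f (snd p) + d)) (tagged_cells n).

Lemma shifted_cells_partition n c d : (1 <= n)%nat -> simple_partition (shifted_cells n c d).
Proof.
  intros hn. apply simple_partition_iff.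
  replace (map fst (shifted_cells n c d)) with (map fst (grid_partition n))
    by (simpl; rewrite map_map; reflexivity).
  apply grid_partition_sets, hn.
Qed.

Lemma simple_integral_shifted_cells n c d : (1 <= n)%nat ->
  simple_integral mu (shifted_cells n c d) = riemann_sum n f + d.
Proof.
  intros hn. rewrite simple_integral_lsum. simpl. rewrite measure_outside, lsum_map. simpl.
  rewrite (lsum_ext_in _ (fun p => f (snd p) * mu (fst p) + d * mu (fst p)))
    by (intros; ring).
  rewrite lsum_plus, lsum_scal, tagged_cells_mass by auto. unfold riemann_sum. ring.
Qed.

Lemma shifted_cells_below n : (1 <= n)%nat -> simple_below f (shifted_cells n (- B) (- (K * mesh n))).
Proof.
  intros hn. constructor.
  { simpl. intros x _. pose proof (Rabs_le_inv _ _ (Hbd x)). lra. }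
  rewrite Forall_map, Forall_forall. intros p hp x hx. simpl.
  destruct (tagged_cells_spec n p hn hp) as [_ H]. pose proof (Rabs_le_inv _ _ (Hlip x (snd p))).
  assert (K * Rabs (x - snd p) <= K * mesh n) by (apply Rmult_le_compat_l; auto). lra.
Qed.

Lemma shifted_cells_above n : (1 <= n)%nat -> simple_above f (shifted_cells n B (K * mesh n)).
Proof.
  intros hn. constructor.
  { simpl. intros x _. pose proof (Rabs_le_inv _ _ (Hbd x)). lra. }
  rewrite Forall_map, Forall_forall. intros p hp x hx. simpl.
  destruct (tagged_cells_spec n p hn hp) as [_ H]. pose proof (Rabs_le_inv _ _ (Hlip x (snd p))).
  assert (K * Rabs (x - snd p) <= K * mesh n) by (apply Rmult_le_compat_l; auto). lra.
Qed.

Lemma integral_riemann_sum_approx I n : is_integral mu f I -> (1 <= n)%nat ->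
  Rabs (I - riemann_sum n f) <= K * mesh n.
Proof.
  intros [H1 [H2 _]] hn.
  pose proof (H1 _ (shifted_cells_partition n _ _ hn) (shifted_cells_below n hn)).
  pose proof (H2 _ (shifted_cells_partition n _ _ hn) (shifted_cells_above n hn)).
  rewrite simple_integral_shifted_cells in * by auto. apply Rabs_le. lra.
Qed.

Lemma integral_exists : exists I, is_integral mu f I.
Proof.
  destruct Hmu as [Hf _].
  set (lower := fun v => exists l, simple_partition l /\ simple_below f l /\ v = simple_integral mu l).
  set (top := [((fun _ : R => True), B)]). set (bot := [((fun _ : R => True), - B)]).
  assert (Htop : simple_partition top /\ simple_above f top).
  { split; [apply simple_partition_iff, set_partition_single|].
    constructor; [|constructor]. simpl. intros x _. pose proof (Rabs_le_inv _ _ (Hbd x)). lra. }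
  assert (Hbot : simple_partition bot /\ simple_below f bot).
  { split; [apply simple_partition_iff, set_partition_single|].
    constructor; [|constructor]. simpl. intros x _. pose proof (Rabs_le_inv _ _ (Hbd x)). lra. }
  assert (Hb : bound lower).
  { exists (simple_integral mu top). intros v [l [h1 [h2 ->]]].
    apply (simple_integral_below_le_above mu Hf f); tauto. }
  destruct (completeness lower Hb (ex_intro _ _ (ex_intro _ bot (conj (proj1 Hbot) (conj (proj2 Hbot) eq_refl)))))
    as [I [HI1 HI2]].
  exists I. split; [|split].
  - intros l h1 h2. apply HI1. exists l; auto.
  - intros u h1 h2. apply HI2. intros v [l [g1 [g2 ->]]].
    apply (simple_integral_below_le_above mu Hf f); auto.
  - intros eta heta.
    destruct (archimed_inv (2 * K * (b - a)) eta heta) as [n [hn Hn]].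
    exists (shifted_cells n (- B) (- (K * mesh n))), (shifted_cells n B (K * mesh n)).
    split; [apply shifted_cells_partition, hn|]. split; [apply shifted_cells_below, hn|].
    split; [apply shifted_cells_partition, hn|]. split; [apply shifted_cells_above, hn|].
    rewrite !simple_integral_shifted_cells by auto.
    replace (2 * K * (b - a) / INR n) with (2 * (K * mesh n)) in Hn by (unfold mesh; field; apply not_0_INR; lia).
    lra.
Qed.

End LipschitzIntegrand.

End RiemannSums.

Lemma cos_scaled_lipschitz c x y : 0 <= c -> Rabs (cos (c * x) - cos (c * y)) <= c * Rabs (x - y).
Proof.
  intros Hc. eapply Rle_trans; [apply cos_sub_Rabs_le|].
  rewrite <- Rmult_minus_distr_l, Rabs_mult, Rabs_pos_eq by lra. lra.
Qed.

Lemma sin_scaled_lipschitz c x y : 0 <= c -> Rabs (sin (c * x) - sin (c * y)) <= c * Rabs (x - y).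
Proof.
  intros Hc. eapply Rle_trans; [apply sin_sub_Rabs_le|].
  rewrite <- Rmult_minus_distr_l, Rabs_mult, Rabs_pos_eq by lra. lra.
Qed.

Lemma mode_freq_nonneg j : 0 <= 2 * PI * INR j.
Proof. pose proof PI_RGT_0. pose proof (pos_INR j). nra. Qed.

Lemma Rabs_integral_le mu f B I : borel_probability_measure mu -> (forall x, Rabs (f x) <= B) ->
  is_integral mu f I -> Rabs I <= B.
Proof.
  intros [_ HT] Hb [H1 [H2 _]].
  assert (Hp : forall c, simple_partition [((fun _ : R => True), c)])
    by (intros; apply simple_partition_iff, set_partition_single).
  assert (Ha : simple_above f [((fun _ : R => True), B)]).
  { constructor; [|constructor]. simpl. intros x _. pose proof (Rabs_le_inv _ _ (Hb x)). lra. }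
  assert (Hbl : simple_below f [((fun _ : R => True), - B)]).
  { constructor; [|constructor]. simpl. intros x _. pose proof (Rabs_le_inv _ _ (Hb x)). lra. }
  pose proof (H2 _ (Hp B) Ha). pose proof (H1 _ (Hp (- B)) Hbl).
  simpl in *. rewrite HT in *. apply Rabs_le. lra.
Qed.

Lemma fourier_abs_le_2 mu xi s : borel_probability_measure mu -> fourier_abs mu xi s -> s <= 2.
Proof.
  intros Hmu [C [S [HC [HS ->]]]].
  pose proof (Rabs_le_inv _ _ (Rabs_integral_le mu _ 1 C Hmu (fun x => Rabs_le _ _ (COS_bound _)) HC)).
  pose proof (Rabs_le_inv _ _ (Rabs_integral_le mu _ 1 S Hmu (fun x => Rabs_le _ _ (SIN_bound _)) HS)).
  rewrite <- (sqrt_pow2 2) by lra. apply sqrt_le_1_alt. nra.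
Qed.

Lemma riemann_sum_second_diff_cos_sq_sum mu a b n N e :
  riemann_sum mu a b n (second_diff (cos_sq_sum N) e)
  = sumR N (fun i => coef_cos e (S i) * riemann_sum mu a b n (fun t => cos (2 * PI * INR (S i) * t))
                    + coef_sin e (S i) * riemann_sum mu a b n (fun t => sin (2 * PI * INR (S i) * t))).
Proof.
  rewrite (riemann_sum_ext _ _ _ _ _ _ (second_diff_cos_sq_sum N e)), riemann_sum_sumR.
  apply sumR_ext. intros i _. rewrite <- riemann_sum_lin. apply riemann_sum_ext.
  intros t. apply second_diff_cos_sq_term. lia.
Qed.

Section FourierCoefficients.

Variable mu : (R -> Prop) -> R.
Variable eps : R.
Hypothesis Hmu : borel_probability_measure mu.
Hypothesis Heps : 0 < eps <= 1.
Hypothesis Hsupp : mu (fun x => eps <= x <= 1) = 1.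

Variables Cf Sf : nat -> R.
Hypothesis HC : forall j, is_integral mu (fun x => cos (2 * PI * INR j * x)) (Cf j).
Hypothesis HS : forall j, is_integral mu (fun x => sin (2 * PI * INR j * x)) (Sf j).

(* Integrate [second_diff (cos_sq_sum N) eps >= PI^2 eps^2 / 2 - 4 / N] against [mu],
   through Riemann sums, which are linear and converge to each integral. *)
Lemma coef_pairing_lower N : (1 <= N)%nat ->
  PI ^ 2 * eps ^ 2 / 2 - 4 / INR N
  <= sumR N (fun i => coef_cos eps (S i) * Cf (S i) + coef_sin eps (S i) * Sf (S i)).
Proof.
  intros HN.
  set (A := sumR N (fun i => (Rabs (coef_cos eps (S i)) + Rabs (coef_sin eps (S i))) * (2 * PI * INR (S i)))).
  apply (le_of_forall_sub_inv _ _ (A * (1 - eps))). intros n Hn.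
  assert (Hlow : PI ^ 2 * eps ^ 2 / 2 - 4 / INR N <= riemann_sum mu eps 1 n (second_diff (cos_sq_sum N) eps)).
  { apply (riemann_sum_lower mu eps 1 Hmu ltac:(lra) Hsupp); [exact Hn|].
    intros t Ht. apply second_diff_cos_sq_sum_lower; auto. }
  rewrite riemann_sum_second_diff_cos_sq_sum in Hlow.
  enough (sumR N (fun i => coef_cos eps (S i) * riemann_sum mu eps 1 n (fun t => cos (2 * PI * INR (S i) * t))
                           + coef_sin eps (S i) * riemann_sum mu eps 1 n (fun t => sin (2 * PI * INR (S i) * t)))
          - sumR N (fun i => coef_cos eps (S i) * Cf (S i) + coef_sin eps (S i) * Sf (S i))
          <= A * (1 - eps) / INR n) by lra.
  replace (A * (1 - eps) / INR n) with (A * mesh eps 1 n) by (unfold mesh, Rdiv; ring).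
  unfold A. rewrite <- sumR_minus, (Rmult_comm (sumR _ _) (mesh eps 1 n)), <- sumR_scal.
  apply sumR_le. intros i _.
  pose proof (mode_freq_nonneg (S i)) as HK.
  pose proof (integral_riemann_sum_approx mu eps 1 Hmu ltac:(lra) Hsupp _ 1 _ HK
                (fun x y => cos_scaled_lipschitz _ x y HK) (fun x => Rabs_le _ _ (COS_bound _))
                _ n (HC (S i)) Hn) as Ec.
  pose proof (integral_riemann_sum_approx mu eps 1 Hmu ltac:(lra) Hsupp _ 1 _ HK
                (fun x y => sin_scaled_lipschitz _ x y HK) (fun x => Rabs_le _ _ (SIN_bound _))
                _ n (HS (S i)) Hn) as Es.
  rewrite Rabs_minus_sym in Ec, Es.
  set (h := mesh eps 1 n) in *. set (K := 2 * PI * INR (S i)) in *.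
  set (a := coef_cos eps (S i)). set (b := coef_sin eps (S i)).
  set (rc := riemann_sum mu eps 1 n (fun t => cos (K * t))) in *.
  set (rs := riemann_sum mu eps 1 n (fun t => sin (K * t))) in *.
  replace (a * rc + b * rs - (a * Cf (S i) + b * Sf (S i)))
    with (a * (rc - Cf (S i)) + b * (rs - Sf (S i))) by ring.
  eapply Rle_trans; [apply Rle_abs|]. eapply Rle_trans; [apply Rabs_triang|].
  rewrite !Rabs_mult. pose proof (Rabs_pos a). pose proof (Rabs_pos b).
  assert (Rabs a * Rabs (rc - Cf (S i)) <= Rabs a * (K * h)) by (apply Rmult_le_compat_l; auto).
  assert (Rabs b * Rabs (rs - Sf (S i)) <= Rabs b * (K * h)) by (apply Rmult_le_compat_l; auto).
  nra.
Qed.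

Lemma fourier_lower_bound s :
  (forall j, (1 <= j)%nat -> sqrt (Cf j ^ 2 + Sf j ^ 2) <= s) ->
  PI * eps / (8 + 2 * PI * eps) <= s.
Proof.
  intros Hs. pose proof PI_RGT_0 as HP. assert (Hpe : 0 < PI * eps) by nra.
  assert (s0 : 0 <= s) by (eapply Rle_trans; [apply sqrt_pos| apply (Hs 1%nat (le_n 1))]).
  assert (Hsum : PI ^ 2 * eps ^ 2 / 2 <= s * (4 * PI * eps + PI ^ 2 * eps ^ 2)).
  { apply (le_of_forall_sub_inv _ _ 4). intros N HN.
    eapply Rle_trans; [apply coef_pairing_lower, HN|].
    apply Rle_trans with (sumR N (fun i => s * coef_norm eps (S i))).
    - apply sumR_le. intros i _. eapply Rle_trans; [apply coef_lin_comb_le; lia|].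
      rewrite Rmult_comm. apply Rmult_le_compat_r; [apply coef_norm_nonneg| apply Hs; lia].
    - rewrite sumR_scal. apply Rmult_le_compat_l; auto. apply sumR_coef_norm_le, Heps. }
  apply Rmult_le_reg_r with ((8 + 2 * PI * eps) * (PI * eps / 2)); [nra|].
  replace (PI * eps / (8 + 2 * PI * eps) * ((8 + 2 * PI * eps) * (PI * eps / 2)))
    with (PI ^ 2 * eps ^ 2 / 2) by (field; nra).
  replace (s * ((8 + 2 * PI * eps) * (PI * eps / 2)))
    with (s * (4 * PI * eps + PI ^ 2 * eps ^ 2)) by field.
  exact Hsum.
Qed.

End FourierCoefficients.

Lemma eps_div_5_le eps : 0 < eps <= 1 -> eps / 5 <= PI * eps / (8 + 2 * PI * eps).
Proof.
  intros He. pose proof PI_RGT_0. pose proof PI2_3_2.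
  apply Rmult_le_reg_r with (5 * (8 + 2 * PI * eps)); [nra|].
  replace (eps / 5 * (5 * (8 + 2 * PI * eps))) with (eps * (8 + 2 * PI * eps)) by field.
  replace (PI * eps / (8 + 2 * PI * eps) * (5 * (8 + 2 * PI * eps))) with (eps * (5 * PI))
    by (field; nra).
  apply Rmult_le_compat_l; nra.
Qed.

Theorem lemma1 : forall eps : R, 0 < eps <= 1 ->
  (forall mu : (R -> Prop) -> R,
     borel_probability_measure mu ->
     mu (fun x => eps <= x <= 1) = 1 ->
     exists s : R,
       is_lub (fun a => exists j : nat, (1 <= j)%nat /\ fourier_abs mu (INR j) a) s /\
       PI * eps / (8 + 2 * PI * eps) <= s) /\
  eps / 5 <= PI * eps / (8 + 2 * PI * eps).
Proof.
  intros eps He. split; [|apply eps_div_5_le, He].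
  intros mu Hmu Hsupp.
  set (Cf := fun j : nat => epsilon (inhabits 0) (is_integral mu (fun x => cos (2 * PI * INR j * x)))).
  set (Sf := fun j : nat => epsilon (inhabits 0) (is_integral mu (fun x => sin (2 * PI * INR j * x)))).
  assert (HC : forall j, is_integral mu (fun x => cos (2 * PI * INR j * x)) (Cf j)).
  { intros j. apply epsilon_spec. pose proof (mode_freq_nonneg j) as HK.
    exact (integral_exists mu eps 1 Hmu ltac:(lra) Hsupp _ 1 _ HK
             (fun x y => cos_scaled_lipschitz _ x y HK) (fun x => Rabs_le _ _ (COS_bound _))). }
  assert (HS : forall j, is_integral mu (fun x => sin (2 * PI * INR j * x)) (Sf j)).
  { intros j. apply epsilon_spec. pose proof (mode_freq_nonneg j) as HK.
    exact (integral_exists mu eps 1 Hmu ltac:(lra) Hsupp _ 1 _ HK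
             (fun x y => sin_scaled_lipschitz _ x y HK) (fun x => Rabs_le _ _ (SIN_bound _))). }
  set (E := fun a => exists j : nat, (1 <= j)%nat /\ fourier_abs mu (INR j) a).
  assert (Hmem : forall j, (1 <= j)%nat -> E (sqrt (Cf j ^ 2 + Sf j ^ 2)))
    by (intros j hj; exists j; split; [exact hj| exists (Cf j), (Sf j); auto]).
  assert (Hbound : bound E) by (exists 2; intros a [j [_ Ha]]; exact (fourier_abs_le_2 mu _ a Hmu Ha)).
  destruct (completeness E Hbound (ex_intro _ _ (Hmem 1%nat (le_n 1)))) as [s Hs].
  exists s. split; [exact Hs|].
  apply (fourier_lower_bound mu eps Hmu He Hsupp Cf Sf HC HS).
  intros j hj. apply (proj1 Hs), Hmem, hj.
Qed.
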